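(* Let $f \colon \mathcal{J} \to \mathbb{P}^1$ be a pointed map of degree $n\neq 0$. Then there is a pointed naive homotopy between $f$ and a map of the form $M_f \oplus (1,0:0,1)_n$ for some pointed matrix $M_f \in \mathrm{SL}_2(R)$.
   Context: Let $k$ be a field, $R = k[x,y,z,w]/(x+w-1,\,xw-yz)$, $\mathcal{J}=\operatorname{Spec}(R)$ pointed at $\mathbf{j}=(x-1,y,z,w)$, $\mathbb{P}^1$ pointed at $[1:0]$. A morphism $\mathcal{J}\to\mathbb{P}^1$ is an invertible sheaf with two generating sections; its degree is its class in $\operatorname{Pic}(\mathcal{J})\cong\mathbb{Z}$, where $n>0$ corresponds to $\mathcal{P}_n=\langle(x^n,z^n)^T,(y^n,w^n)^T\rangle\subseteq R^2$ and $-n$ to $\mathcal{Q}_n=\langle(x^n,y^n)^T,(z^n,w^n)^T\rangle$. For $n>0$, $(a_0,a_1:b_0,b_1)_n$ is the map with sheaf $\mathcal{P}_n$ and sections $a_0(x^n,z^n)^T+a_1(y^n,w^n)^T$, $b_0(x^n,z^n)^T+b_1(y^n,w^n)^T$; $(a_0,a_1:b_0,b_1)_{-n}$ is analogous with $\mathcal{Q}_n$. A matrix $M\in\mathrm{SL}_2(R)$ is pointed if $M(\mathbf{j})$ is the identity, and $M\oplus[s_0,s_1]$ is the map with the same sheaf and sections $M\cdot(s_0,s_1)^T$. *)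

From HB Require Import structures.
From mathcomp Require Import all_boot all_order all_algebra.
From mathcomp Require Import ring_quotient generic_quotient.
From mathcomp Require Import mpoly.
From Stdlib Require Import ClassicalEpsilon.

Set Implicit Arguments.
Unset Strict Implicit.
Unset Printing Implicit Defensive.

Import GRing.Theory.
Local Open Scope ring_scope.
Local Open Scope quotient_scope.

Section Jouanolou.
Variable k : fieldType.

(* The polynomial ring k[x,y,z,w]; variables indexed x=0, y=1, z=2, w=3. *)
Definition Pxyzw := {mpoly k[4]}.
Definition pvar (i : nat) : Pxyzw := 'X_(inord i).

Definition Jgen1 : Pxyzw := pvar 0 + pvar 3 - 1.
Definition Jgen2 : Pxyzw := pvar 0 * pvar 3 - pvar 1 * pvar 2.

Definition inJ (p : Pxyzw) : bool :=
  if excluded_middle_informative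
       (exists c1 c2 : Pxyzw, p = c1 * Jgen1 + c2 * Jgen2)
  then true else false.

Definition jpt : 'I_4 -> k := fun i => if val i == 0%N then 1 else 0.

Lemma inJP p : reflect (exists c1 c2 : Pxyzw, p = c1 * Jgen1 + c2 * Jgen2) (inJ p).
Proof.
rewrite /inJ; case: excluded_middle_informative => h; by constructor.
Qed.

Lemma inJ_idealr_closed : idealr_closed inJ.
Proof.
split.
- by apply/inJP; exists 0, 0; rewrite !mul0r addr0.
- apply/negP => /inJP [c1 [c2 h]].
  have := congr1 (meval jpt) h.
  rewrite meval1 mevalD !mevalM /Jgen1 /Jgen2 mevalB mevalD meval1 mevalB !mevalM.
  rewrite /pvar !mevalXU /jpt /=.
  rewrite (@inordK 3 0) // (@inordK 3 1) // (@inordK 3 2) // (@inordK 3 3) //=.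
  rewrite !(mulr0, mul0r, addr0, subrr, subr0, add0r, mul1r, oppr0) => /eqP.
  by rewrite oner_eq0.
- move=> a u v /inJP [c1 [c2 ->]] /inJP [d1 [d2 ->]].
  apply/inJP; exists (a * c1 + d1), (a * c2 + d2).
  by rewrite !mulrDl !mulrDr !mulrA addrACA.
Qed.

HB.instance Definition _ := isIdealr.Build Pxyzw inJ inJ_idealr_closed.

(* R = k[x,y,z,w]/(x + w - 1, xw - yz), the coordinate ring of J. *)
Definition Rj := {ideal_quot (inJ : idealr Pxyzw)}.

Definition rx : Rj := \pi_Rj (pvar 0).
Definition ry : Rj := \pi_Rj (pvar 1).
Definition rz : Rj := \pi_Rj (pvar 2).
Definition rw : Rj := \pi_Rj (pvar 3).

(* Evaluation at the k-point j = (x-1, y, z, w) of J, i.e. the residue map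
   R -> R/j = k (well defined since the relations vanish at (1,0,0,0)). *)
Definition evj (r : Rj) : k := meval jpt (repr r).

End Jouanolou.

(* Maps to P^1 of nonzero degree, over a coordinate ring A (A = R or R[t]). *)
(* The invertible module of degree d is the submodule of A^2 generated by  *)
(* the two column vectors gen0 d, gen1 d:                                   *)
(*   d = n > 0 : P_n = < (x^n, z^n)^T , (y^n, w^n)^T >                      *)
(*   d = -n < 0: Q_n = < (x^n, y^n)^T , (z^n, w^n)^T >                      *)
Section Maps.
Variable A : comNzRingType.
Variables (x y z w : A).

Definition vec2 (a b : A) : 'cV[A]_2 :=
  \col_(i < 2) (if val i == 0%N then a else b).

Definition gen0 (d : int) : 'cV[A]_2 :=
  match d with
  | Posz n => vec2 (x ^+ n) (z ^+ n)
  | Negz m => vec2 (x ^+ m.+1) (y ^+ m.+1)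
  end.

Definition gen1 (d : int) : 'cV[A]_2 :=
  match d with
  | Posz n => vec2 (y ^+ n) (w ^+ n)
  | Negz m => vec2 (z ^+ m.+1) (w ^+ m.+1)
  end.

(* The coefficient matrix C = [[a0, a1], [b0, b1]] encodes the map
   (a0,a1:b0,b1)_d, whose sections are
   s0 = a0 gen0 + a1 gen1  and  s1 = b0 gen0 + b1 gen1. *)
Definition section (d : int) (C : 'M[A]_2) (i : 'I_2) : 'cV[A]_2 :=
  C i ord0 *: gen0 d + C i ord_max *: gen1 d.

Definition generating (d : int) (C : 'M[A]_2) : Prop :=
  exists D : 'M[A]_2,
    gen0 d = D ord0 ord0 *: section d C ord0 + D ord0 ord_max *: section d C ord_max /\
    gen1 d = D ord_max ord0 *: section d C ord0 + D ord_max ord_max *: section d C ord_max.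

End Maps.

(* Equality of two maps with the same invertible module: an isomorphism of
   the (rank one projective) module with itself, i.e. multiplication by a
   unit, carrying the sections of the first onto those of the second. *)
Definition same_map (A : comNzRingType) (s s' : 'I_2 -> 'cV[A]_2) : Prop :=
  exists u v : A, u * v = 1 /\ forall i, s' i = u *: s i.

Section JMaps.
Variable k : fieldType.
Local Notation R := (Rj k).

Definition secR (d : int) (C : 'M[R]_2) := section (rx k) (ry k) (rz k) (rw k) d C.

Definition is_mapJ (d : int) (C : 'M[R]_2) : Prop :=
  generating (rx k) (ry k) (rz k) (rw k) d C.

(* Pointed: f(j) = [1:0], i.e. the section s1 vanishes at j
   (the fibre of P_n / Q_n at j embeds in k^2). *)
Definition pointed_mapJ (d : int) (C : 'M[R]_2) : Prop :=
  map_mx (@evj k) (secR d C ord_max) = 0.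

Definition pointed_SL2 (M : 'M[R]_2) : Prop :=
  \det M = 1 /\ map_mx (@evj k) M = 1%:M.

(* M (+) (a0,a1:b0,b1)_d has the same module and sections M (s0, s1)^T;
   on coefficient matrices this is C |-> M *m C.  In particular
   M (+) (1,0:0,1)_d is encoded by the coefficient matrix M. *)
Definition oplus (M C : 'M[R]_2) : 'M[R]_2 := M *m C.
Definition id_map : 'M[R]_2 := 1%:M.

(* Maps J x A^1 -> P^1, over R[t] = {poly R}: the module P_n[t] (resp.
   Q_n[t]) with generators the constant images of gen0, gen1. *)
Local Notation Rt := {poly R}.
Definition secRt (d : int) (H : 'M[Rt]_2) :=
  section (rx k)%:P (ry k)%:P (rz k)%:P (rw k)%:P d H.

Definition restr_t (c : R) (v : 'cV[Rt]_2) : 'cV[R]_2 := map_mx (fun p => p.[c]) v.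

(* A pointed naive homotopy from the map (d, C) to the map (d, C'):
   a map H : J x A^1 -> P^1 with H|_{t=0} = f, H|_{t=1} = g, and whose
   restriction to {j} x A^1 is constant at the base point [1:0]. *)
Definition pointed_naive_homotopy (d : int) (C C' : 'M[R]_2) : Prop :=
  exists H : 'M[Rt]_2,
    generating (rx k)%:P (ry k)%:P (rz k)%:P (rw k)%:P d H /\
    map_mx (map_poly (@evj k)) (secRt d H ord_max) = 0 /\
    same_map (fun i => secR d C i) (fun i => restr_t 0 (secRt d H i)) /\
    same_map (fun i => secR d C' i) (fun i => restr_t 1 (secRt d H i)).

End JMaps.

From HB Require Import structures.
From mathcomp Require Import all_boot all_order all_algebra.
From mathcomp Require Import ring_quotient generic_quotient.
From mathcomp Require Import mpoly.
From mathcomp Require Import ring.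

Set Implicit Arguments.
Unset Strict Implicit.
Unset Printing Implicit Defensive.

Import GRing.Theory.
Local Open Scope ring_scope.

(* Write g0 = (g00, g01)^T and g1 = (g10, g11)^T for the generators of P_n
   (resp. Q_n).  The matrix with rows g0^T, g1^T is singular (xw = yz) and
   its diagonal entries are powers of x and w, hence comaximal (x + w = 1).
   Adding to a row of the coefficient matrix C any combination of the left
   kernel vectors (g10, -g00), (g11, -g01) leaves the sections unchanged,
   and this freedom suffices to make det C = 1.  Pointedness and generation
   make C(j) upper triangular with C(j)_00 <> 0; rescaling C by a unit lifting
   C(j)_00^-1 before normalising the determinant gives C(j) = [[1, c], [0, 1]].
   The linear homotopy "row 0 -= c t * row 1" then joins C to a pointed
   matrix of SL_2(R) while keeping the second section, hence the base point,
   fixed. *)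

Lemma ord2P (i : 'I_2) : i = ord0 \/ i = ord_max.
Proof. by case: i => [[|[|m]]] lti; [left | right | by []]; apply: val_inj. Qed.

Definition mx22 (T : Type) (a b c e : T) : 'M[T]_2 :=
  \matrix_(i, j) if val i == 0%N then (if val j == 0%N then a else b)
                 else (if val j == 0%N then c else e).

Lemma mx22E (T : Type) (a b c e : T) :
  (mx22 a b c e ord0 ord0 = a) * (mx22 a b c e ord0 ord_max = b) *
  (mx22 a b c e ord_max ord0 = c) * (mx22 a b c e ord_max ord_max = e).
Proof. by rewrite !mxE. Qed.

Lemma mx22_eta (T : Type) (M : 'M[T]_2) :
  M = mx22 (M ord0 ord0) (M ord0 ord_max) (M ord_max ord0) (M ord_max ord_max).
Proof. by apply/matrixP => i j; rewrite mxE; case: (ord2P i) => ->; case: (ord2P j) => ->. Qed.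

Lemma map_mx22 (T T' : Type) (f : T -> T') (a b c e : T) :
  map_mx f (mx22 a b c e) = mx22 (f a) (f b) (f c) (f e).
Proof. by apply/matrixP => i j; rewrite !mxE; case: ifP; case: ifP. Qed.

Lemma scalar_mx22 (A : pzRingType) (a : A) : a%:M = mx22 a 0 0 a.
Proof.
by apply/matrixP => i j; case: (ord2P i) => ->; case: (ord2P j) => ->; rewrite !mxE.
Qed.

Lemma det_mx22 (A : comNzRingType) (M : 'M[A]_2) :
  \det M = M ord0 ord0 * M ord_max ord_max - M ord0 ord_max * M ord_max ord0.
Proof.
rewrite (expand_det_row _ ord0) big_ord_recl big_ord1 /cofactor !det_mx11.
rewrite !mxE /= expr0 expr1 !mul1r mulN1r mulrN.
have -> : lift ord0 (0 : 'I_1) = ord_max by apply: val_inj.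
by have -> : lift ord_max (0 : 'I_1) = ord0 by apply: val_inj.
Qed.

Lemma map_mx_horner_polyC (A : comNzRingType) m n (t : A) (B : 'M[A]_(m, n)) :
  map_mx (horner_eval t) (map_mx polyC B) = B.
Proof. by apply/matrixP => i j; rewrite !mxE horner_evalE hornerC. Qed.

Lemma map_mx_map_poly_polyC (A B : nzRingType) (f : {rmorphism A -> B}) m n
    (M : 'M[A]_(m, n)) :
  map_mx (map_poly f) (map_mx polyC M) = map_mx polyC (map_mx f M).
Proof. by apply/matrixP => i j; rewrite !mxE map_polyC. Qed.

Section RowShear.
Variable A : comNzRingType.

Definition row_shear (c : A) (M : 'M[A]_2) : 'M[A]_2 :=
  mx22 (M ord0 ord0 - c * M ord_max ord0) (M ord0 ord_max - c * M ord_max ord_max)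
       (M ord_max ord0) (M ord_max ord_max).

Lemma det_row_shear c M : \det (row_shear c M) = \det M.
Proof. by rewrite !det_mx22 /row_shear !mx22E; ring. Qed.

Lemma row_shear0 M : row_shear 0 M = M.
Proof. by rewrite /row_shear !mul0r !subr0 -mx22_eta. Qed.

Lemma row_shear_unitriangular c : row_shear c (mx22 1 c 0 1) = 1%:M.
Proof. by rewrite /row_shear !mx22E mulr0 mulr1 subr0 subrr scalar_mx22. Qed.

End RowShear.

Lemma map_row_shear (A B : comNzRingType) (f : {rmorphism A -> B}) c M :
  map_mx f (row_shear c M) = row_shear (f c) (map_mx f M).
Proof. by rewrite /row_shear map_mx22 !mxE !rmorphB !rmorphM. Qed.

Section Sections.
Variables (A : comNzRingType) (g0 g1 : 'cV[A]_2).

Definition sec (C : 'M[A]_2) (i : 'I_2) : 'cV[A]_2 :=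
  C i ord0 *: g0 + C i ord_max *: g1.

Definition generates (C : 'M[A]_2) : Prop :=
  exists D : 'M[A]_2,
    g0 = D ord0 ord0 *: sec C ord0 + D ord0 ord_max *: sec C ord_max /\
    g1 = D ord_max ord0 *: sec C ord0 + D ord_max ord_max *: sec C ord_max.

Lemma sec_scale u C i : sec (u *: C) i = u *: sec C i.
Proof. by rewrite /sec !mxE scalerDr !scalerA. Qed.

Lemma sec_row_shear_max c C : sec (row_shear c C) ord_max = sec C ord_max.
Proof. by rewrite /sec !mx22E. Qed.

Lemma generates_scale u v C : u * v = 1 -> generates C -> generates (u *: C).
Proof.
move=> uv1 [D [gen0 gen1]]; exists (v *: D).
have vuK d s : (v * d) *: (u *: s) = d *: s.
  by rewrite scalerA mulrAC [v * u]mulrC uv1 mul1r.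
by rewrite !sec_scale !mxE !vuK.
Qed.

Lemma generates_det1 H : \det H = 1 -> generates H.
Proof.
rewrite det_mx22 => detH.
exists (mx22 (H ord_max ord_max) (- H ord0 ord_max) (- H ord_max ord0) (H ord0 ord0)).
rewrite !mx22E.
by split; apply/matrixP => r j; rewrite !mxE -[LHS]mul1r -detH; ring.
Qed.

End Sections.

Lemma map_sec (A B : comNzRingType) (phi : {rmorphism A -> B}) g0 g1 C i :
  map_mx phi (sec g0 g1 C i) = sec (map_mx phi g0) (map_mx phi g1) (map_mx phi C) i.
Proof. by apply/matrixP => r j; rewrite !mxE rmorphD !rmorphM. Qed.

Section SingularGenerators.
Variables (A : comNzRingType) (g0 g1 : 'cV[A]_2).
Hypothesis g_singular : g0 ord0 ord0 * g1 ord_max ord0 = g1 ord0 ord0 * g0 ord_max ord0.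

Definition shift_rows (C : 'M[A]_2) (a0 b0 a1 b1 : A) : 'M[A]_2 :=
  mx22 (C ord0 ord0 + a0 * g1 ord0 ord0 + b0 * g1 ord_max ord0)
       (C ord0 ord_max - a0 * g0 ord0 ord0 - b0 * g0 ord_max ord0)
       (C ord_max ord0 + a1 * g1 ord0 ord0 + b1 * g1 ord_max ord0)
       (C ord_max ord_max - a1 * g0 ord0 ord0 - b1 * g0 ord_max ord0).

Lemma shift_row_sec c0 c1 a b :
  (c0 + a * g1 ord0 ord0 + b * g1 ord_max ord0) *: g0
    + (c1 - a * g0 ord0 ord0 - b * g0 ord_max ord0) *: g1 = c0 *: g0 + c1 *: g1.
Proof.
have g_kernel : g0 ord0 ord0 * g1 ord_max ord0 - g1 ord0 ord0 * g0 ord_max ord0 = 0.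
  by rewrite g_singular subrr.
apply/matrixP => r j; rewrite !mxE (ord1 j).
case: (ord2P r) => ->.
- transitivity (c0 * g0 ord0 ord0 + c1 * g1 ord0 ord0
                + b * (g0 ord0 ord0 * g1 ord_max ord0 - g1 ord0 ord0 * g0 ord_max ord0)).
    by ring.
  by rewrite g_kernel mulr0 addr0.
- transitivity (c0 * g0 ord_max ord0 + c1 * g1 ord_max ord0
                - a * (g0 ord0 ord0 * g1 ord_max ord0 - g1 ord0 ord0 * g0 ord_max ord0)).
    by ring.
  by rewrite g_kernel mulr0 subr0.
Qed.

Lemma sec_shift_rows C a0 b0 a1 b1 i : sec g0 g1 (shift_rows C a0 b0 a1 b1) i = sec g0 g1 C i.
Proof. by case: (ord2P i) => ->; rewrite /sec /shift_rows !mx22E; apply: shift_row_sec. Qed.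

Variables p q : A.
Hypothesis g_comaximal : p * g0 ord0 ord0 + q * g1 ord_max ord0 = 1.

(* The two shift directions are proportional (g is singular), so det is
   affine in the shift; generation and g_comaximal make its linear part
   equal to 1 - det C. *)
Lemma generates_det1_shift C :
  generates g0 g1 C -> exists a0 b0 a1 b1, \det (shift_rows C a0 b0 a1 b1) = 1.
Proof.
move=> [D [gen0 gen1]].
have := congr1 (fun v : 'cV[A]_2 => v ord0 ord0) gen0.
have := congr1 (fun v : 'cV[A]_2 => v ord_max ord0) gen1.
rewrite /= !mxE => gen11 gen00.
pose e := 1 - \det C.
exists (e * p * D ord0 ord_max), (e * q * D ord_max ord_max),
       (- (e * p * D ord0 ord0)), (- (e * q * D ord_max ord0)).
apply/eqP; rewrite -subr_eq0 det_mx22 /shift_rows !mx22E.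
rewrite /e det_mx22; apply/eqP.
move: gen00 gen11 g_comaximal g_singular.
set g00 := g0 ord0 ord0; set g01 := g0 ord_max ord0.
set g10 := g1 ord0 ord0; set g11 := g1 ord_max ord0.
set C00 := C ord0 ord0; set C01 := C ord0 ord_max.
set C10 := C ord_max ord0; set C11 := C ord_max ord_max.
set D00 := D ord0 ord0; set D01 := D ord0 ord_max.
set D10 := D ord_max ord0; set D11 := D ord_max ord_max.
move=> gen00 gen11 comax sing.
transitivity ((1 - (C00 * C11 - C01 * C10)) *
  (p * (D00 * (C00 * g00 + C01 * g10) + D01 * (C10 * g00 + C11 * g10) - g00)
   + q * (D10 * (C00 * g01 + C01 * g11) + D11 * (C10 * g01 + C11 * g11) - g11)
   + (p * g00 + q * g11 - 1))
  + (1 - (C00 * C11 - C01 * C10)) ^+ 2 * p * q * (D00 * D11 - D01 * D10)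
    * (g00 * g11 - g10 * g01)).
  by ring.
by rewrite -gen00 -gen11 comax sing !(subrr, mulr0, addr0).
Qed.

Variables (K : fieldType) (f : {rmorphism A -> K}) (iota : {rmorphism K -> A}).
Hypothesis iotaK : cancel iota f.
Hypotheses (f_g00 : f (g0 ord0 ord0) = 1) (f_g10 : f (g1 ord0 ord0) = 0)
           (f_g11 : f (g1 ord_max ord0) = 0).

Definition pointed (C : 'M[A]_2) : Prop := map_mx f (sec g0 g1 C ord_max) = 0.

Lemma pointed_col0 C :
  generates g0 g1 C -> pointed C -> f (C ord_max ord0) = 0 /\ f (C ord0 ord0) != 0.
Proof.
move=> [D [gen0 _]] /matrixP /(_ ord0 ord0).
rewrite !mxE rmorphD !rmorphM f_g00 f_g10 mulr1 mulr0 addr0 => fC10.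
split=> //; apply/eqP => fC00.
have := congr1 (fun v : 'cV[A]_2 => f (v ord0 ord0)) gen0.
rewrite /= !mxE !(rmorphD, rmorphM) f_g00 f_g10 fC00 fC10.
by rewrite !(mulr0, mul0r, addr0) => /eqP; rewrite oner_eq0.
Qed.

Lemma map_shift_rows_col0 C a0 b0 a1 b1 i :
  f (shift_rows C a0 b0 a1 b1 i ord0) = f (C i ord0).
Proof.
by case: (ord2P i) => ->;
  rewrite /shift_rows !mx22E !rmorphD !rmorphM f_g10 f_g11 !mulr0 !addr0.
Qed.

Lemma pointed_det1_normal_form C : generates g0 g1 C -> pointed C ->
  exists (u v : A) (M : 'M[A]_2),
    [/\ u * v = 1, \det M = 1, forall i, sec g0 g1 M i = u *: sec g0 g1 C i
      & map_mx f M = mx22 1 (f (M ord0 ord_max)) 0 1].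
Proof.
move=> C_gen C_pointed; have [fC10 fC00] := pointed_col0 C_gen C_pointed.
pose u := iota (f (C ord0 ord0))^-1; pose v := iota (f (C ord0 ord0)).
have uv1 : u * v = 1 by rewrite -rmorphM mulVf // rmorph1.
have [a0 [b0 [a1 [b1 detM]]]] := generates_det1_shift (generates_scale uv1 C_gen).
set M := shift_rows _ _ _ _ _ in detM *.
have fM00 : f (M ord0 ord0) = 1 by rewrite map_shift_rows_col0 mxE rmorphM iotaK mulVf.
have fM10 : f (M ord_max ord0) = 0 by rewrite map_shift_rows_col0 mxE rmorphM fC10 mulr0.
have fM11 : f (M ord_max ord_max) = 1.
  have := congr1 f detM.
  by rewrite det_mx22 rmorphB !rmorphM fM00 fM10 rmorph1 mul1r mulr0 subr0.
exists u, v, M; split=> //.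
  by move=> i; rewrite sec_shift_rows sec_scale.
by rewrite [M in LHS]mx22_eta map_mx22 fM00 fM10 fM11.
Qed.

Lemma pointed_homotopy_to_SL2 C : generates g0 g1 C -> pointed C ->
  exists (M : 'M[A]_2) (H : 'M[{poly A}]_2),
    let secH := sec (map_mx polyC g0) (map_mx polyC g1) H in
    [/\ \det M = 1 /\ map_mx f M = 1%:M,
        generates (map_mx polyC g0) (map_mx polyC g1) H,
        map_mx (map_poly f) (secH ord_max) = 0,
        same_map (sec g0 g1 C) (fun i => map_mx (horner_eval 0) (secH i))
      & same_map (sec g0 g1 M) (fun i => map_mx (horner_eval 1) (secH i))].
Proof.
move=> C_gen C_pointed.
have [u [v [M [uv1 detM secM fM]]]] := pointed_det1_normal_form C_gen C_pointed.
set c := f (M ord0 ord_max) in fM.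
pose H := row_shear ((iota c)%:P * 'X) (map_mx polyC M).
have secH t i : map_mx (horner_eval t) (sec (map_mx polyC g0) (map_mx polyC g1) H i)
                = sec g0 g1 (row_shear (iota c * t) M) i.
  rewrite map_sec map_row_shear !map_mx_horner_polyC.
  congr (sec _ _ (row_shear _ M) _).
  by rewrite -[LHS]/(((iota c)%:P * 'X).[t]) hornerMX hornerC.
exists (row_shear (iota c) M), H; split; first split.
- by rewrite det_row_shear.
- by rewrite map_row_shear iotaK fM row_shear_unitriangular.
- by apply: generates_det1; rewrite det_row_shear det_map_mx detM rmorph1.
- rewrite sec_row_shear_max -map_sec map_mx_map_poly_polyC secM map_mxZ C_pointed.
  by rewrite scaler0 map_mx0.
- by exists u, v; split=> // i; rewrite secH mulr0 row_shear0 secM.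
- by exists 1, 1; split=> [|i]; rewrite ?mulr1 // secH mulr1 scale1r.
Qed.

End SingularGenerators.

Lemma comaximal_exp (A : comNzRingType) (a b : A) n :
  a + b = 1 -> exists p q, p * a ^+ n + q * b ^+ n = 1.
Proof.
have geom (a' b' : A) : a' + b' = 1 -> a' * \sum_(i < n) b' ^+ i + b' ^+ n = 1.
  move=> ab1; elim: n => [|m IH]; first by rewrite big_ord0 mulr0 add0r expr0.
  by rewrite big_ord_recr /= mulrDr -addrA exprS -mulrDl ab1 mul1r.
move=> ab1; set s := \sum_(i < n) a ^+ i.
have sba : a ^+ n + b * s = 1 by rewrite addrC geom // addrC.
exists (\sum_(i < n) (b * s) ^+ i), (s ^+ n).
by rewrite mulrC -exprMn [s * b]mulrC geom.
Qed.

Lemma gen0_map (A B : comNzRingType) (phi : {rmorphism A -> B}) x y z d :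
  gen0 (phi x) (phi y) (phi z) d = map_mx phi (gen0 x y z d).
Proof. by case: d => n; apply/matrixP => i j; rewrite !mxE (fun_if phi) !rmorphXn. Qed.

Lemma gen1_map (A B : comNzRingType) (phi : {rmorphism A -> B}) y z w d :
  gen1 (phi y) (phi z) (phi w) d = map_mx phi (gen1 y z w d).
Proof. by case: d => n; apply/matrixP => i j; rewrite !mxE (fun_if phi) !rmorphXn. Qed.

Section Generators.
Variables (A : comNzRingType) (x y z w : A).
Local Notation g0 d := (gen0 x y z d).
Local Notation g1 d := (gen1 y z w d).

Lemma gen_singular d : x * w = y * z ->
  g0 d ord0 ord0 * g1 d ord_max ord0 = g1 d ord0 ord0 * g0 d ord_max ord0.
Proof. by move=> xw_yz; case: d => n; rewrite !mxE /= -!exprMn xw_yz // mulrC. Qed.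

Lemma gen_comaximal d : x + w = 1 ->
  exists p q, p * g0 d ord0 ord0 + q * g1 d ord_max ord0 = 1.
Proof. by move=> xw1; case: d => n; rewrite !mxE /=; apply: comaximal_exp xw1. Qed.

Lemma map_gen_entries (K : nzRingType) (f : {rmorphism A -> K}) d :
  d != 0 -> f x = 1 -> f y = 0 -> f z = 0 -> f w = 0 ->
  [/\ f (g0 d ord0 ord0) = 1, f (g1 d ord0 ord0) = 0 & f (g1 d ord_max ord0) = 0].
Proof.
move=> + fx fy fz fw; case: d => [[|n]|n] d_neq0 //;
  by rewrite !mxE /= !rmorphXn ?fx ?fy ?fz ?fw expr1n expr0n.
Qed.

End Generators.

Local Open Scope quotient_scope.

Section EvaluationAtj.
Variable k : fieldType.
Local Notation R := (Rj k).

Lemma jpt_inord i : (i < 4)%N -> jpt k (inord i) = if i == 0%N then 1 else 0.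
Proof. by move=> lti; rewrite /jpt /= inordK. Qed.

Lemma meval_jpt_inJ p : inJ p -> meval (jpt k) p = 0.
Proof.
move=> /inJP [c1 [c2 ->]].
rewrite /Jgen1 /Jgen2 /pvar !(mevalD, mevalN, mevalM, meval1, mevalXU) !jpt_inord //=.
by rewrite !(addr0, subrr, mul0r, mulr0, oppr0).
Qed.

Lemma evj_pi p : evj (\pi_R p) = meval (jpt k) p.
Proof.
have J : inJ (repr (\pi_R p) - p).
  have := @Quotient.idealrBE _ (@inJ k : idealr (Pxyzw k)) (repr (\pi_R p)) p.
  by rewrite reprK eqxx => J; exact: J.
by apply/eqP; rewrite -subr_eq0 -mevalB meval_jpt_inJ.
Qed.

Lemma evj_is_zmod_morphism : zmod_morphism (@evj k).
Proof. by move=> a b; rewrite -[a]reprK -[b]reprK -rmorphB !evj_pi mevalB. Qed.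

Lemma evj_is_monoid_morphism : monoid_morphism (@evj k).
Proof.
split; first by rewrite -(rmorph1 \pi_R) evj_pi meval1.
by move=> a b; rewrite -[a]reprK -[b]reprK -rmorphM !evj_pi mevalM.
Qed.

End EvaluationAtj.

HB.instance Definition _ k :=
  GRing.isZmodMorphism.Build (Rj k) k (@evj k) (@evj_is_zmod_morphism k).
HB.instance Definition _ k :=
  GRing.isMonoidMorphism.Build (Rj k) k (@evj k) (@evj_is_monoid_morphism k).

Section JouanolouRelations.
Variable k : fieldType.
Local Notation R := (Rj k).
Local Notation x := (rx k).
Local Notation y := (ry k).
Local Notation z := (rz k).
Local Notation w := (rw k).

Lemma pi_inJ p : inJ p -> \pi_R p = 0.
Proof.
move=> Jp; apply/eqP; rewrite -(rmorph0 \pi_R).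
by have := @Quotient.idealrBE _ (@inJ k : idealr (Pxyzw k)) p 0; rewrite subr0 => <-.
Qed.

Lemma addxw : x + w = 1.
Proof.
apply/eqP; rewrite -subr_eq0; apply/eqP.
have : inJ (Jgen1 k) by apply/inJP; exists 1, 0; rewrite mul1r mul0r addr0.
by move=> /pi_inJ; rewrite /Jgen1 !rmorphB rmorphD rmorph1.
Qed.

Lemma mulxw : x * w = y * z.
Proof.
apply/eqP; rewrite -subr_eq0; apply/eqP.
have : inJ (Jgen2 k) by apply/inJP; exists 0, 1; rewrite mul1r mul0r add0r.
by move=> /pi_inJ; rewrite /Jgen2 !rmorphB !rmorphM.
Qed.

Lemma evj_pvar i : (i < 4)%N -> evj (\pi_R (pvar k i)) = if i == 0%N then 1 else 0.
Proof. by move=> lti; rewrite evj_pi /pvar mevalXU jpt_inord. Qed.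

Lemma evj_xyzw : [/\ evj x = 1, evj y = 0, evj z = 0 & evj w = 0].
Proof. by rewrite !evj_pvar. Qed.

Definition constR : {rmorphism k -> R} := \pi_R \o @mpolyC 4 k.

Lemma constRK : cancel constR (@evj k).
Proof. by move=> c; rewrite /= evj_pi mevalC. Qed.

End JouanolouRelations.

Theorem proposition3p18 (k : fieldType) (d : int) (C : 'M[Rj k]_2) :
  d != 0 -> is_mapJ d C -> pointed_mapJ d C ->
  exists M : 'M[Rj k]_2,
    pointed_SL2 M /\ pointed_naive_homotopy d C (oplus M (id_map k)).
Proof.
move=> d_neq0 C_map C_pointed.
have [p [q comax]] := gen_comaximal (ry k) (rz k) d (addxw k).
have [evx evy evz evw] := evj_xyzw k.
have [ev00 ev10 ev11] := map_gen_entries d_neq0 evx evy evz evw.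
have [M [H [M_pointed H_map H_pointed H0 H1]]] :=
  pointed_homotopy_to_SL2 (gen_singular d (mulxw k)) comax (@constRK k) ev00 ev10 ev11
    C_map C_pointed.
exists M; split; first exact: M_pointed.
rewrite /oplus /id_map mulmx1; exists H.
rewrite /generating /secRt /restr_t /section !(gen0_map polyC) !(gen1_map polyC).
exact: (conj H_map (conj H_pointed (conj H0 H1))).
Qed.
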